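(* Let $C$ be an open cone in $V$ and let $T$ be an open cone in $V$. Then $T\in\mathscr T(C)$ if and only if the dual cone $T^*$ is an extreme set of $C^*$.
   Context: $V$ is a finite-dimensional real vector space with dual $V^*$. An open cone is a nonempty open convex set $T\subset V$ with $\lambda T\subseteq T$ for all $\lambda>0$ and $0\notin T$; $\partial T$ is its boundary in $V$. Open tangent cone at $x\in\partial T$: $\tau(T,x):=\{\lambda(y-x):\lambda>0,\ y\in T\}$. For a set of cones $\mathbb T$, $\Gamma(\mathbb T):=\{\tau(T,x):T\in\mathbb T,\ x\in\partial T\}$ and $\mathscr T(C):=\bigcup_{k\ge1}\Gamma^k(\{C\})$. Dual cone: $T^*:=\{z\in V^*:\langle z,x\rangle\ge0\ \forall x\in T\}$. A convex subset $E$ of a convex set $K$ is an extreme set if whenever a relative interior point of a line segment in $K$ lies in $E$, both endpoints of the segment lie in $E$. *)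

(* V = 'rV[R]_n, V^* = 'rV[R]_n with the
   standard pairing <z,x> = \sum_i z_i x_i. *)
From HB Require Import structures.
From mathcomp Require Import all_boot all_order all_algebra.
From mathcomp Require Import all_classical all_reals all_analysis.
Set Implicit Arguments. Unset Strict Implicit. Unset Printing Implicit Defensive.
Import Order.TTheory GRing.Theory Num.Theory.
Import numFieldNormedType.Exports.
Local Open Scope classical_set_scope.
Local Open Scope ring_scope.

Section Cones.
Variables (R : realType) (n : nat).
Notation V := 'rV[R]_n.

Definition pairing (z x : V) : R := \sum_(i < n) z ord0 i * x ord0 i.

Definition convex_set (A : set V) : Prop :=
  forall x y, A x -> A y -> forall t : R, 0 <= t -> t <= 1 ->
    A ((1 - t) *: x + t *: y).

Definition open_cone (T : set V) : Prop :=
  [/\ T !=set0, open T, convex_set T,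
      (forall (l : R) x, 0 < l -> T x -> T (l *: x)) & ~ T 0].

Definition boundary (A : set V) : set V := closure A `\` interior A.

Definition tangent_cone (T : set V) (x : V) : set V :=
  [set v | exists l : R, 0 < l /\ exists y, T y /\ v = l *: (y - x)].

Definition Gamma (F : set (set V)) : set (set V) :=
  [set S | exists T, F T /\ exists x, boundary T x /\ S = tangent_cone T x].

Definition tangent_family (C : set V) : set (set V) :=
  [set S | exists k : nat, (1 <= k)%N /\ iter k Gamma [set C] S].

Definition dual_cone (T : set V) : set V :=
  [set z | forall x, T x -> 0 <= pairing z x].

Definition extreme_set (E K : set V) : Prop :=
  [/\ convex_set E, E `<=` K &
      forall a b, K a -> K b -> a != b -> forall t : R, 0 < t -> t < 1 ->
        E ((1 - t) *: a + t *: b) -> E a /\ E b].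

End Cones.

From Pilot Require Import Defs.
From mathcomp Require Import all_boot all_order all_algebra.
From mathcomp Require Import all_classical all_reals all_analysis.
From mathcomp Require Import lra ring zify.
Set Implicit Arguments. Unset Strict Implicit. Unset Printing Implicit Defensive.
Import Order.TTheory GRing.Theory Num.Theory.
Import numFieldNormedType.Exports.
Local Open Scope classical_set_scope.
Local Open Scope ring_scope.

(* If x is in the closure of an open cone S, the dual of the tangent cone tau(S,x)
   is S^* /\ x^perp, the face of S^* exposed by x; as a face of a face is a face, every
   cone of T(C) has a dual that is extreme in C^*.
   Conversely, let T^* be extreme in C^* and start from S = C = tau(C,0).  While S <> T,
   duality of open cones gives g0 in S^* \ T^*.  The cone S^* - T^* + R_{>0} g0 avoids 0
   (a face of a cone absorbs summands), so some x is >= 0 on it and > 0 at one of its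
   points: then x >= 0 on S^*, x = 0 on T^*, and x > 0 somewhere on S^*.  Such an x lies on the boundary of S and
   T^* is contained in tau(S,x)^*, so S can be replaced by tau(S,x).  Each new x is
   outside the span of the previous ones, so this stops after at most dim V steps.
   All separations come from one lemma, proved by induction on the dimension with a
   supremum (the Hahn-Banach extension step): a convex cone K not containing 0 carries
   a functional that is >= 0 on K and > 0 somewhere on K. *)

Lemma ge0_const_of_affine_ge0 (R : realFieldType) (a b : R) :
  (forall l, 0 < l -> 0 <= a + l * b) -> 0 <= a.
Proof.
move=> ab_ge0; rewrite leNgt; apply/negP => a_lt0.
have [b_le0|b_gt0] := lerP b 0; first by have := ab_ge0 1 ltr01; lra.
have l_gt0 : 0 < - a / (2 * b) by rewrite divr_gt0 ?mulr_gt0 // oppr_gt0.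
have := ab_ge0 _ l_gt0; rewrite (_ : - a / (2 * b) * b = - a / 2); first lra.
by field; rewrite gt_eqF.
Qed.

Lemma ge0_slope_of_affine_ge0 (R : realFieldType) (a b : R) :
  (forall l, 0 < l -> 0 <= a + l * b) -> 0 <= b.
Proof.
move=> ab_ge0; rewrite leNgt; apply/negP => b_lt0.
have [a_le0|a_gt0] := lerP a 0; first by have := ab_ge0 1 ltr01; lra.
have l_gt0 : 0 < (a + 1) / - b by rewrite divr_gt0 ?oppr_gt0 //; lra.
have := ab_ge0 _ l_gt0; rewrite (_ : (a + 1) / - b * b = - (a + 1)); first lra.
by field; rewrite lt_eqF.
Qed.

Section Pairing.
Variables (R : realType) (n : nat).
Implicit Types (x y z w : 'rV[R]_n) (a : R).

Lemma pairingC x y : pairing x y = pairing y x.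
Proof. by apply: eq_bigr => i _; rewrite mulrC. Qed.

Lemma pairingDr z x y : pairing z (x + y) = pairing z x + pairing z y.
Proof. by rewrite /pairing -big_split; apply: eq_bigr => i _; rewrite mxE mulrDr. Qed.

Lemma pairingZr z x a : pairing z (a *: x) = a * pairing z x.
Proof. by rewrite /pairing mulr_sumr; apply: eq_bigr => i _; rewrite mxE mulrCA. Qed.

Lemma pairingDl z w x : pairing (z + w) x = pairing z x + pairing w x.
Proof. by rewrite pairingC pairingDr !(pairingC x). Qed.

Lemma pairingZl z x a : pairing (a *: z) x = a * pairing z x.
Proof. by rewrite pairingC pairingZr pairingC. Qed.

Lemma pairingNr z x : pairing z (- x) = - pairing z x.
Proof. by rewrite -scaleN1r pairingZr mulN1r. Qed.

Lemma pairingBr z x y : pairing z (x - y) = pairing z x - pairing z y.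
Proof. by rewrite pairingDr pairingNr. Qed.

Lemma pairing0r z : pairing z 0 = 0.
Proof. by rewrite -(scale0r 0) pairingZr mul0r. Qed.

Lemma pairing0l z : pairing 0 z = 0.
Proof. by rewrite pairingC pairing0r. Qed.

Lemma pairing_gt0 z : z != 0 -> 0 < pairing z z.
Proof.
move=> z_neq0; have sqr_ge0 i : 0 <= z ord0 i * z ord0 i by rewrite -expr2 sqr_ge0.
rewrite lt_def sumr_ge0 ?andbT //; apply: contraNN z_neq0 => /eqP/psumr_eq0P z0.
apply/eqP/rowP => j; rewrite mxE; apply/eqP; rewrite -sqrf_eq0 expr2.
by apply/eqP; apply: z0.
Qed.

End Pairing.

Section RowCoordinates.
Variables (R : realType) (n : nat).
Implicit Types (x y : 'rV[R]_n.+1) (w : 'rV[R]_n) (a c : R).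

Definition row_head x : R := x ord0 ord0.
Definition row_tail x : 'rV[R]_n := \row_(j < n) x ord0 (lift ord0 j).
Definition row_cons c w : 'rV[R]_n.+1 :=
  \row_(i < n.+1) if unlift ord0 i is Some j then w ord0 j else c.

Lemma row_headD x y : row_head (x + y) = row_head x + row_head y.
Proof. by rewrite /row_head mxE. Qed.

Lemma row_headZ a x : row_head (a *: x) = a * row_head x.
Proof. by rewrite /row_head mxE. Qed.

Lemma row_tailD x y : row_tail (x + y) = row_tail x + row_tail y.
Proof. by apply/rowP => j; rewrite !mxE. Qed.

Lemma row_tailZ a x : row_tail (a *: x) = a *: row_tail x.
Proof. by apply/rowP => j; rewrite !mxE. Qed.

Lemma row_cons_head c w : row_head (row_cons c w) = c.
Proof. by rewrite /row_head mxE unlift_none. Qed.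

Lemma row_consK c w : row_tail (row_cons c w) = w.
Proof. by apply/rowP => j; rewrite !mxE liftK. Qed.

Lemma row_cons0 x : row_head x = 0 -> row_cons 0 (row_tail x) = x.
Proof.
move=> x0; apply/rowP => i; rewrite !mxE; case: unliftP => [j ->|->]; first by rewrite mxE.
by rewrite -x0 /row_head (ord1 ord0).
Qed.

Lemma row_cons0D w w' : row_cons 0 (w + w') = row_cons 0 w + row_cons 0 w'.
Proof. by apply/rowP => i; rewrite !mxE; case: unlift => [j|]; rewrite ?mxE ?addr0. Qed.

Lemma row_cons0Z a w : row_cons 0 (a *: w) = a *: row_cons 0 w.
Proof. by apply/rowP => i; rewrite !mxE; case: unlift => [j|]; rewrite ?mxE ?mulr0. Qed.

Lemma row_cons00 : row_cons 0 (0 : 'rV[R]_n) = 0.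
Proof. by apply/rowP => i; rewrite !mxE; case: unlift => [j|]; rewrite ?mxE. Qed.

Lemma pairing_row_cons c w x :
  pairing (row_cons c w) x = c * row_head x + pairing w (row_tail x).
Proof.
rewrite /pairing big_ord_recl /row_head !mxE unlift_none; congr (_ + _).
by apply: eq_bigr => i _; rewrite !mxE liftK.
Qed.

End RowCoordinates.

Section Separation.
Variable R : realType.

Definition convex_cone n (K : set 'rV[R]_n) : Prop :=
  (forall x y, K x -> K y -> K (x + y)) /\
  (forall (l : R) x, 0 < l -> K x -> K (l *: x)).

Definition head0_slice n (K : set 'rV[R]_n.+1) : set 'rV[R]_n :=
  [set y | K (row_cons 0 y)].

Section Slice.
Variables (n : nat) (K : set 'rV[R]_n.+1).
Hypothesis coneK : convex_cone K.

Lemma convex_cone_head0_slice : convex_cone (head0_slice K).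
Proof.
have [KD KZ] := coneK.
by split=> [x y Kx Ky|l x l_gt0 Kx]; rewrite /head0_slice /= ?row_cons0D ?row_cons0Z;
  [apply: KD|apply: KZ].
Qed.

Lemma head0_slice_tail k : K k -> row_head k = 0 -> head0_slice K (row_tail k).
Proof. by move=> Kk k0; rewrite /head0_slice /= row_cons0. Qed.

Lemma head0_slice_mix u v : K u -> 0 < row_head u -> K v -> row_head v < 0 ->
  head0_slice K (row_tail ((- row_head v) *: u + row_head u *: v)).
Proof.
move=> Ku u_gt0 Kv v_lt0; have [KD KZ] := coneK.
apply: head0_slice_tail; last by rewrite row_headD !row_headZ; ring.
by apply: KD; apply: KZ; rewrite // oppr_gt0.
Qed.

(* Hahn-Banach in one more dimension: the best head coefficient is the supremum of
   the lower bounds imposed by the elements of [K] with positive head. *)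
Lemma dual_head0_slice_extend w :
  (exists2 u, K u & 0 < row_head u) -> (exists2 v, K v & row_head v < 0) ->
  dual_cone (head0_slice K) w -> exists c, dual_cone K (row_cons c w).
Proof.
move=> [u0 Ku0 u0_gt0] [v0 Kv0 v0_lt0] dw.
pose p x := pairing w (row_tail x).
pose L := [set r | exists u, [/\ K u, 0 < row_head u & r = - p u / row_head u]].
have L_ub v : K v -> row_head v < 0 -> ubound L (p v / - row_head v).
  move=> Kv v_lt0 _ [u [Ku u_gt0 ->]].
  have := dw _ (head0_slice_mix Ku u_gt0 Kv v_lt0).
  rewrite /p row_tailD !row_tailZ pairingDr !pairingZr => uv_ge0.
  by rewrite ler_pdivlMr ?oppr_gt0 // mulrAC ler_pdivrMr //; lra.
have L0 : L !=set0 by exists (- p u0 / row_head u0), u0.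
have hasL : has_ubound L by exists (p v0 / - row_head v0); apply: L_ub.
exists (sup L) => k Kk; rewrite pairing_row_cons.
case: (ltgtP (row_head k) 0) => [k_lt0|k_gt0|k0].
- have := ge_sup L0 (L_ub _ Kk k_lt0).
  by rewrite ler_pdivlMr ?oppr_gt0 // /p; lra.
- have := ub_le_sup hasL (ex_intro _ k (And3 Kk k_gt0 erefl)).
  by rewrite ler_pdivrMr // /p; lra.
- by rewrite k0 mulr0 add0r; apply: dw; apply: head0_slice_tail.
Qed.

End Slice.

Lemma convex_cone_separation n (K : set 'rV[R]_n) :
  K !=set0 -> convex_cone K -> ~ K 0 ->
  exists z, dual_cone K z /\ exists2 k, K k & 0 < pairing z k.
Proof.
elim: n K => [|n IH] K [k0 Kk0] coneK K0.
  by case: K0; rewrite (_ : 0 = k0) //; apply/rowP => -[].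
have IHslice : head0_slice K !=set0 -> exists w, dual_cone (head0_slice K) w /\
    exists2 y, head0_slice K y & 0 < pairing w y.
  move=> ?; apply: (IH _ _ (convex_cone_head0_slice coneK)) => //.
  by rewrite /head0_slice /= row_cons00.
have positive_slice c w y : head0_slice K y -> 0 < pairing w y ->
    exists2 k, K k & 0 < pairing (row_cons c w) k.
  move=> Ky wy; exists (row_cons 0 y) => //.
  by rewrite pairing_row_cons row_cons_head mulr0 add0r row_consK.
have [[u Ku u_gt0]|noPos] := pselect (exists2 u, K u & 0 < row_head u);
  have [[v Kv v_lt0]|noNeg] := pselect (exists2 v, K v & row_head v < 0).
- have [|w [dw [y Ky wy]]] := IHslice; first by eexists; exact: head0_slice_mix Ku _ Kv _.
  have [c dc] := dual_head0_slice_extend coneK (ex_intro2 _ _ u Ku u_gt0)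
    (ex_intro2 _ _ v Kv v_lt0) dw.
  by exists (row_cons c w); split => //; apply: positive_slice Ky wy.
- exists (row_cons 1 0); split; last first.
    by exists u; rewrite // pairing_row_cons pairing0l addr0 mul1r.
  move=> k Kk; rewrite pairing_row_cons pairing0l addr0 mul1r leNgt.
  by apply/negP => k_lt0; apply: noNeg; exists k.
- exists (row_cons (-1) 0); split; last first.
    by exists v; rewrite // pairing_row_cons pairing0l addr0 mulN1r oppr_gt0.
  move=> k Kk; rewrite pairing_row_cons pairing0l addr0 mulN1r oppr_ge0 leNgt.
  by apply/negP => k_gt0; apply: noPos; exists k.
- have head0 k : K k -> row_head k = 0.
    move=> Kk; case: (ltgtP (row_head k) 0) => // k_head.
      by case: noNeg; exists k.
    by case: noPos; exists k.
  have [|w [dw [y Ky wy]]] := IHslice.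
    by exists (row_tail k0); apply: head0_slice_tail; rewrite ?head0.
  exists (row_cons 0 w); split; last by apply: positive_slice Ky wy.
  move=> k Kk; rewrite pairing_row_cons mul0r add0r.
  by apply: dw; apply: head0_slice_tail; rewrite ?head0.
Qed.

End Separation.

Section ConvexCones.
Variables (R : realType) (n : nat).
Local Notation V := 'rV[R]_n.
Implicit Types (K S T : set V) (x y z : V).

Lemma convex_cone_convex K : convex_cone K -> Defs.convex_set K.
Proof.
move=> [KD KZ] x y Kx Ky t t_ge0 t_le1.
have [->|t_neq0] := eqVneq t 0; first by rewrite subr0 scale1r scale0r addr0.
have [->|t_neq1] := eqVneq t 1; first by rewrite subrr scale0r add0r scale1r.
apply: KD; apply: KZ; rewrite // ?subr_gt0 lt_neqAle ?t_neq1 ?t_le1 //.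
by rewrite eq_sym t_neq0.
Qed.

Lemma convex_setZ_convex_cone K : Defs.convex_set K ->
  (forall (l : R) x, 0 < l -> K x -> K (l *: x)) -> convex_cone K.
Proof.
move=> convK KZ; split => // x y Kx Ky.
have -> : x + y = 2 *: ((1 - 2^-1) *: x + 2^-1 *: y).
  by rewrite scalerDr !scalerA (_ : 1 - 2^-1 = 2^-1 :> R) ?mulfV // ?scale1r //; field.
by apply: KZ => //; apply: convK; rewrite ?invr_ge0 // invf_le1 // ler1n.
Qed.

Lemma open_cone_convex_cone T : open_cone T -> convex_cone T.
Proof. by case=> _ _ convT TZ _; apply: convex_setZ_convex_cone. Qed.

Lemma dual_cone0 K : dual_cone K 0.
Proof. by move=> x _; rewrite pairing0l. Qed.

Lemma dual_coneD K z z' : dual_cone K z -> dual_cone K z' -> dual_cone K (z + z').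
Proof. by move=> Kz Kz' x Kx; rewrite pairingDl addr_ge0 ?Kz ?Kz'. Qed.

Lemma dual_coneZ K (l : R) z : 0 <= l -> dual_cone K z -> dual_cone K (l *: z).
Proof. by move=> l_ge0 Kz x Kx; rewrite pairingZl mulr_ge0 ?Kz. Qed.

Lemma dual_cone_convex K : Defs.convex_set (dual_cone K).
Proof.
by move=> z z' Kz Kz' t t_ge0 t_le1; apply: dual_coneD; apply: dual_coneZ; rewrite ?subr_ge0.
Qed.

(* Separate the cone [T - R_{>=0} x], which avoids 0 since [x] is not in [T]. *)
Lemma convex_cone_point_separation T x : T !=set0 -> convex_cone T -> ~ T 0 -> ~ T x ->
  exists z, [/\ z != 0, dual_cone T z & pairing z x <= 0].
Proof.
move=> [y0 Ty0] [TD TZ] T0 Tx.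
pose K := [set v | exists y l, [/\ T y, 0 <= l & v = y - l *: x]].
have [|||z [Kz [_ [y [l [Ty l_ge0 ->]]]] z_gt0]] := @convex_cone_separation R n K.
- by exists y0, y0, 0; rewrite scale0r subr0.
- split=> [_ _ [y1 [l1 [Ty1 l1_ge0 ->]]] [y2 [l2 [Ty2 l2_ge0 ->]]]|
           a _ a_gt0 [y [l [Ty l_ge0 ->]]]].
    exists (y1 + y2), (l1 + l2); split; rewrite ?addr_ge0 //; first exact: TD.
    by rewrite scalerDl opprD addrACA.
  exists (a *: y), (a * l); split; first exact: TZ.
    exact: mulr_ge0 (ltW a_gt0) l_ge0.
  by rewrite scalerBr scalerA.
- move=> [y [l [Ty l_ge0 /esym/eqP]]]; rewrite subr_eq0 => /eqP y_eq.
  have [l0|l_neq0] := eqVneq l 0; first by apply: T0; rewrite -(scale0r x) -l0 -y_eq.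
  apply: Tx; rewrite -[x]scale1r -(mulVf l_neq0) -scalerA -y_eq.
  by apply: TZ; rewrite // invr_gt0 lt_def l_neq0.
have Tz : dual_cone T z.
  by move=> y' Ty'; rewrite -[y'](subr0) -(scale0r x); apply: Kz; exists y', 0.
exists z; split => //.
- by apply: contra_ltN z_gt0 => /eqP ->; rewrite pairing0l.
- rewrite -oppr_ge0; apply: (@ge0_slope_of_affine_ge0 _ (pairing z y0)) => s s_gt0.
  have := Kz (y0 - s *: x); rewrite pairingBr pairingZr mulrN; apply.
  by exists y0, s; rewrite ltW.
Qed.

Lemma extreme_set_trans (E F K : set V) :
  extreme_set E F -> extreme_set F K -> extreme_set E K.
Proof.
move=> [convE EF E_face] [_ FK F_face].
split=> // [x /EF/FK //|a b Ka Kb ab t t_gt0 t_lt1 Et].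
have [Fa Fb] := F_face a b Ka Kb ab t t_gt0 t_lt1 (EF _ Et).
exact: E_face a b Fa Fb ab t t_gt0 t_lt1 Et.
Qed.

Lemma extreme_exposed K x : Defs.convex_set K -> (forall z, K z -> 0 <= pairing z x) ->
  extreme_set (K `&` [set z | pairing z x = 0]) K.
Proof.
move=> convK Kx; split.
- move=> a b [Ka ax] [Kb bx] t t_ge0 t_le1; split; first exact: convK.
  by rewrite /= pairingDl !pairingZl ax bx !mulr0 addr0.
- by move=> z [].
- move=> a b Ka Kb _ t t_gt0 t_lt1 [_]; rewrite /= pairingDl !pairingZl => abx.
  have := Kx _ Ka; have := Kx _ Kb => bx_ge0 ax_ge0.
  by split; split=> //=; nra.
Qed.

Lemma extreme_dual_coneD C T a b : extreme_set (dual_cone T) (dual_cone C) ->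
  dual_cone C a -> dual_cone C b -> dual_cone T (a + b) ->
  dual_cone T a /\ dual_cone T b.
Proof.
move=> [_ _ T_face] Ca Cb Tab.
have half_gt0 : (0 : R) < 2^-1 by rewrite invr_gt0.
have half_lt1 : (2^-1 : R) < 1 by rewrite invf_lt1 // ltr1n.
have halfK z : 2^-1 *: (2 *: z) = z by rewrite scalerA mulVf // scale1r.
have mid : (1 - 2^-1) *: (2 *: a) + 2^-1 *: (2 *: b) = a + b.
  by rewrite (_ : 1 - 2^-1 = 2^-1 :> R) ?halfK //; field.
have [ab|ab] := eqVneq (2 *: a) (2 *: b).
  have a_eq_b : a = b by rewrite -[a]halfK ab halfK.
  subst a; suff Tb : dual_cone T b by split.
  by rewrite -[b]halfK scaler_nat [b *+ 2]mulr2n; apply: dual_coneZ; rewrite ?ltW.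
have C2a : dual_cone C (2 *: a) by apply: dual_coneZ.
have C2b : dual_cone C (2 *: b) by apply: dual_coneZ.
have [|T2a T2b] := T_face _ _ C2a C2b ab _ half_gt0 half_lt1; first by rewrite mid.
by rewrite -[a]halfK -[b]halfK; split; apply: dual_coneZ; rewrite ?ltW.
Qed.

End ConvexCones.

Section Topology.
Variables (R : realType) (n : nat).
Local Notation V := 'rV[R]_n.
Implicit Types (A S T : set V) (x y z d : V).

Lemma pairing_continuous z : continuous (pairing z).
Proof.
apply: continuous_big => [[x y]|i _]; first exact: add_continuous.
by move=> x; apply: continuous_comp; [exact: coord_continuous|exact: mulrl_continuous].
Qed.

Lemma dual_cone_closure A z : dual_cone A z -> dual_cone (closure A) z.
Proof.
move=> Az; have : closed (pairing z @^-1` [set r | 0 <= r]).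
  by move/continuous_closedP : (@pairing_continuous z); apply; exact: closed_ge.
move/closure_id => cl_eq x /(closureS (B := pairing z @^-1` [set r | 0 <= r])).
by rewrite -cl_eq; apply => y /Az.
Qed.

Lemma ball_add_scale x d (r : R) : 0 < r -> ball x r (x + (r / (`|d| + 1)) *: d).
Proof.
move=> r_gt0; have d1_gt0 : 0 < `|d| + 1 by rewrite ltr_wpDl.
rewrite -ball_normE /= opprD addNKr normrN normrZ gtr0_norm ?divr_gt0 //.
rewrite -mulrA gtr_pMr // ltr_pdivrMl // mulr1; lra.
Qed.

Lemma open_add_scale A x d : open A -> A x -> exists2 e : R, 0 < e & A (x + e *: d).
Proof.
move=> oA /oA; rewrite /interior /= nbhs_ballP => -[r /= r_gt0 rA].
by exists (r / (`|d| + 1)); [rewrite divr_gt0 ?ltr_wpDl|apply/rA/ball_add_scale].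
Qed.

Lemma closure_add_scale A x d : (forall e : R, 0 < e -> A (x + e *: d)) -> closure A x.
Proof.
move=> Axd B /nbhs_ballP [r /= r_gt0 rB].
exists (x + (r / (`|d| + 1)) *: d); split; last exact/rB/ball_add_scale.
by apply: Axd; rewrite divr_gt0 ?ltr_wpDl.
Qed.

Lemma open_dual_cone_gt0 S x z : open S -> S x -> dual_cone S z -> z != 0 ->
  0 < pairing z x.
Proof.
move=> oS Sx Sz z_neq0; have [e e_gt0 Sxz] := open_add_scale (- z) oS Sx.
have := Sz _ Sxz; rewrite pairingDr pairingZr pairingNr.
by have := mulr_gt0 e_gt0 (pairing_gt0 z_neq0); lra.
Qed.

Lemma open_cone_dual_neq0 T : open_cone T -> exists2 z, dual_cone T z & z != 0.
Proof.
move=> coneT; have [T0 _ _ _ T0'] := coneT.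
have [z [Tz [k _ z_gt0]]] := convex_cone_separation T0 (open_cone_convex_cone coneT) T0'.
by exists z => //; apply: contra_ltN z_gt0 => /eqP ->; rewrite pairing0l.
Qed.

Lemma open_cone_closure_dual S x : open_cone S ->
  (forall z, dual_cone S z -> 0 <= pairing z x) -> closure S x.
Proof.
move=> coneS x_ge0; have [[p Sp] oS _ _ S0] := coneS.
apply: (@closure_add_scale _ _ p) => e e_gt0; apply: contrapT => Sxp.
have [z [z_neq0 Sz]] := convex_cone_point_separation (ex_intro _ p Sp)
  (open_cone_convex_cone coneS) S0 Sxp.
rewrite pairingDr pairingZr.
have := x_ge0 z Sz; have := mulr_gt0 e_gt0 (open_dual_cone_gt0 oS Sp Sz z_neq0); lra.
Qed.

Lemma open_cone_subset_dual S T : open_cone S -> open_cone T ->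
  dual_cone T `<=` dual_cone S -> S `<=` T.
Proof.
move=> [_ oS _ _ _] coneT TS x Sx; apply: contrapT => Tx.
have [T0 _ _ _ T0'] := coneT.
have [z [z_neq0 Tz zx]] :=
  convex_cone_point_separation T0 (open_cone_convex_cone coneT) T0' Tx.
by have := open_dual_cone_gt0 oS Sx (TS _ Tz) z_neq0; lra.
Qed.

End Topology.

Section TangentCone.
Variables (R : realType) (n : nat).
Local Notation V := 'rV[R]_n.
Implicit Types (S C : set V) (x y z v : V).

Lemma tangent_coneZ S x (l : R) v :
  0 < l -> tangent_cone S x v -> tangent_cone S x (l *: v).
Proof.
move=> l_gt0 [m [m_gt0 [y [Sy ->]]]].
by exists (l * m); split; [rewrite mulr_gt0|exists y; rewrite scalerA].
Qed.

Lemma tangent_cone_neq0 S x : S !=set0 -> tangent_cone S x !=set0.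
Proof. by move=> [y Sy]; exists (1 *: (y - x)), 1; split => //; exists y. Qed.

Lemma tangent_cone0 S : (forall (l : R) y, 0 < l -> S y -> S (l *: y)) ->
  tangent_cone S 0 = S.
Proof.
move=> SZ; apply/seteqP; split=> [_ [l [l_gt0 [y [Sy ->]]]]|y Sy].
  by rewrite subr0; apply: SZ.
by exists 1; split => //; exists y; rewrite subr0 scale1r.
Qed.

Lemma boundary_open_notin S x : open S -> boundary S x -> ~ S x.
Proof. by move=> oS [_ Sx'] /oS. Qed.

Lemma open_cone_boundary0 C : open_cone C -> boundary C 0.
Proof.
move=> coneC; have [_ _ _ _ C0] := coneC; split; last by move/interior_subset.
by apply: open_cone_closure_dual => // z _; rewrite pairing0r.
Qed.

Lemma dual_tangent_coneE S x : S !=set0 ->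
  (forall (l : R) y, 0 < l -> S y -> S (l *: y)) -> closure S x ->
  dual_cone (tangent_cone S x) = dual_cone S `&` [set z | pairing z x = 0].
Proof.
move=> [y0 Sy0] SZ clSx; apply/seteqP.
split=> [z Tz|z [Sz zx] _ [l [l_gt0 [y [Sy ->]]]]]; last first.
  by rewrite pairingZr pairingBr zx subr0 mulr_ge0 ?(ltW l_gt0) ?Sz.
have affine_ge0 (s : R) y : 0 < s -> S y -> 0 <= - pairing z x + s * pairing z y.
  move=> s_gt0 Sy; rewrite addrC -pairingZr -pairingBr -[_ - _]scale1r.
  by apply: Tz; exists 1; split => //; exists (s *: y); split => //; apply: SZ.
have Sz : dual_cone S z.
  move=> y Sy; apply: (ge0_slope_of_affine_ge0 (a := - pairing z x)).
  by move=> s /affine_ge0; apply.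
split => //; apply/eqP; rewrite eq_le (dual_cone_closure Sz clSx) andbT -oppr_ge0.
by apply: (@ge0_const_of_affine_ge0 _ _ (pairing z y0)) => s /affine_ge0; apply.
Qed.

Lemma open_tangent_cone S x : open S -> open (tangent_cone S x).
Proof.
move=> oS; rewrite openE => _ [l [l_gt0 [y [Sy ->]]]].
have /oS := Sy; rewrite /interior /= !nbhs_ballP => -[e /= e_gt0 yS].
exists (l * e); first by rewrite /= mulr_gt0.
move=> v; rewrite -!ball_normE /= => lyv.
exists l; split => //; exists (l^-1 *: v + x); split.
  apply: yS; rewrite -ball_normE /= -(ltr_pM2l l_gt0) -[l in l * _]gtr0_norm // -normrZ.
  by rewrite scalerBr scalerDr scalerA mulfV ?gt_eqF // scale1r opprD addrA addrAC -scalerBr.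
by rewrite addrK scalerA mulfV ?gt_eqF // scale1r.
Qed.

Lemma open_cone_tangent_cone S x : open_cone S -> ~ S x -> open_cone (tangent_cone S x).
Proof.
move=> coneS Sx'; have [S0 oS _ _ _] := coneS; have [SD SZ] := open_cone_convex_cone coneS.
split; [exact: tangent_cone_neq0|exact: open_tangent_cone| |exact: tangent_coneZ|].
- apply: convex_cone_convex; split; last exact: tangent_coneZ.
  move=> _ _ [l [l_gt0 [y [Sy ->]]]] [l' [l'_gt0 [y' [Sy' ->]]]].
  have ll'_gt0 : 0 < l + l' by rewrite addr_gt0.
  exists (l + l'); split => //; exists ((l + l')^-1 *: (l *: y + l' *: y')); split.
    by apply: (SZ); rewrite ?invr_gt0 //; apply: SD; apply: (SZ).
  rewrite [RHS]scalerBr scalerA mulfV ?gt_eqF // scale1r !scalerBr scalerDl.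
  by rewrite opprD addrACA.
- move=> [l [l_gt0 [y [Sy /esym/eqP]]]]; rewrite scaler_eq0 gt_eqF //= subr_eq0 => /eqP yx.
  by apply: Sx'; rewrite -yx.
Qed.

Lemma extreme_dual_tangent_cone C S x : S !=set0 ->
  (forall (l : R) y, 0 < l -> S y -> S (l *: y)) -> closure S x ->
  extreme_set (dual_cone S) (dual_cone C) ->
  extreme_set (dual_cone (tangent_cone S x)) (dual_cone C).
Proof.
move=> S0 SZ clSx SC; rewrite dual_tangent_coneE //; apply: extreme_set_trans SC.
by apply: extreme_exposed; [exact: dual_cone_convex|move=> z /dual_cone_closure; apply].
Qed.

End TangentCone.

Section TangentFamily.
Variables (R : realType) (n : nat).
Local Notation V := 'rV[R]_n.
Implicit Types (S C T : set V) (x g f : V).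

Lemma iter_Gamma_extreme C k S : open_cone C -> iter k (@Gamma R n) [set C] S ->
  [/\ S !=set0, (forall (l : R) y, 0 < l -> S y -> S (l *: y)) &
      extreme_set (dual_cone S) (dual_cone C)].
Proof.
move=> [C0 _ _ CZ _]; elim: k S => [|k IH] S /= => [->|[S' [S'k [x [[S'x _] ->]]]]].
  by split => //; split => //; exact: dual_cone_convex.
have [S'0 S'Z S'C] := IH _ S'k.
split; [exact: tangent_cone_neq0|exact: tangent_coneZ|exact: extreme_dual_tangent_cone].
Qed.

Lemma Gamma_self C : open_cone C -> iter 1 (@Gamma R n) [set C] C.
Proof.
move=> coneC; have [_ _ _ CZ _] := coneC.
exists C; split => //; exists 0; rewrite tangent_cone0 //.
by split => //; exact: open_cone_boundary0.
Qed.

Lemma extreme_dual_cone_exposed C S T g0 : extreme_set (dual_cone T) (dual_cone C) ->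
  dual_cone S `<=` dual_cone C -> dual_cone T `<=` dual_cone S ->
  dual_cone S g0 -> ~ dual_cone T g0 ->
  exists x, [/\ forall g, dual_cone S g -> 0 <= pairing g x,
    forall f, dual_cone T f -> pairing f x = 0 &
    exists2 g, dual_cone S g & 0 < pairing g x].
Proof.
move=> TC SC TS Sg0 Tg0'.
pose K := [set v | exists g f (l : R), [/\ dual_cone S g, dual_cone T f, 0 < l &
  v = g - f + l *: g0]].
have [|||z [Kz [_ [g [f [l [Sg Tf l_gt0 ->]]]] z_gt0]]] := @convex_cone_separation R n K.
- by exists (0 - 0 + 1 *: g0), 0, 0, 1; split => //; exact: dual_cone0.
- split=> [_ _ [g [f [l [Sg Tf l_gt0 ->]]]] [g' [f' [l' [Sg' Tf' l'_gt0 ->]]]]|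
           a _ a_gt0 [g [f [l [Sg Tf l_gt0 ->]]]]].
    exists (g + g'), (f + f'), (l + l'); split; rewrite ?addr_gt0 //; try exact: dual_coneD.
    by rewrite addrACA [_ - _ + (_ - _)]addrACA -opprD scalerDl.
  exists (a *: g), (a *: f), (a * l); split; rewrite ?mulr_gt0 //;
    try by apply: dual_coneZ; rewrite ?ltW.
  by rewrite scalerDr scalerBr scalerA.
- move=> [g [f [l [Sg Tf l_gt0 /esym/eqP]]]]; rewrite addrAC subr_eq0 => /eqP f_eq.
  have Cl : dual_cone C (l *: g0) by apply: SC; apply: dual_coneZ; rewrite ?ltW.
  rewrite -f_eq in Tf; have [_ Tlg0] := extreme_dual_coneD TC (SC _ Sg) Cl Tf.
  by apply: Tg0'; rewrite -[g0]scale1r -(mulVf (lt0r_neq0 l_gt0)) -scalerA;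
    apply: dual_coneZ; rewrite ?invr_ge0 ?ltW.
have z_ge0 g' f' (l' : R) : dual_cone S g' -> dual_cone T f' -> 0 < l' ->
    0 <= pairing z g' - pairing z f' + l' * pairing z g0.
  move=> Sg' Tf' l'_gt0; rewrite -pairingZr -pairingBr -pairingDr.
  by apply: Kz; exists g', f', l'.
have zS g' : dual_cone S g' -> 0 <= pairing z g'.
  move=> Sg'; apply: (@ge0_const_of_affine_ge0 _ _ (pairing z g0)) => l' l'_gt0.
  by have := z_ge0 g' 0 l' Sg' (dual_cone0 (K := T)) l'_gt0; rewrite pairing0r subr0.
have zT f' : dual_cone T f' -> pairing z f' = 0.
  move=> Tf'; apply/eqP; rewrite eq_le (zS _ (TS _ Tf')) andbT -oppr_ge0.
  apply: (@ge0_const_of_affine_ge0 _ _ (pairing z g0)) => l' l'_gt0.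
  by have := z_ge0 0 f' l' (dual_cone0 (K := S)) Tf' l'_gt0; rewrite pairing0r sub0r.
exists z; split=> [g' /zS|f' /zT|]; rewrite ?(pairingC _ z) //.
move: z_gt0; rewrite pairingDr pairingBr pairingZr (zT _ Tf) subr0.
have [zg_le0|zg_gt0] := lerP (pairing z g) 0; last by exists g; rewrite // pairingC.
by exists g0; rewrite // pairingC; nra.
Qed.

Lemma exposed_boundary_point C S T : open_cone S -> open_cone T -> S <> T ->
  extreme_set (dual_cone T) (dual_cone C) ->
  dual_cone S `<=` dual_cone C -> dual_cone T `<=` dual_cone S ->
  exists x, [/\ boundary S x, dual_cone T `<=` dual_cone (tangent_cone S x) &
    exists2 g, dual_cone S g & 0 < pairing g x].
Proof.
move=> coneS coneT ST TC SC TS; have [S0 oS _ SZ _] := coneS.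
have [g0 Sg0 Tg0'] : exists2 g0, dual_cone S g0 & ~ dual_cone T g0.
  apply: contrapT => noST; apply: ST.
  apply/seteqP; split; apply: open_cone_subset_dual => //.
  by move=> g Sg; apply: contrapT => Tg'; apply: noST; exists g.
have [x [Sx Tx [g Sg gx]]] := extreme_dual_cone_exposed TC SC TS Sg0 Tg0'.
have clSx : closure S x by apply: open_cone_closure_dual.
have Sx' : ~ S x.
  move=> /(open_dual_cone_gt0 oS); have [f Tf f_neq0] := open_cone_dual_neq0 coneT.
  by move=> /(_ f (TS _ Tf) f_neq0); rewrite Tx ?ltxx.
exists x; split; last by exists g.
- by split=> // /interior_subset.
- by rewrite dual_tangent_coneE // => f Tf; split; [apply: TS|apply: Tx].
Qed.

(* [U] spans the boundary points used so far; the induction is on its codimension. *)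
Lemma extreme_iter_Gamma C T (U : {vspace V}) k S :
  open_cone C -> open_cone T -> extreme_set (dual_cone T) (dual_cone C) ->
  iter k.+1 (@Gamma R n) [set C] S -> open_cone S ->
  (forall g u, dual_cone S g -> u \in U -> pairing g u = 0) ->
  dual_cone T `<=` dual_cone S -> exists k', iter k'.+1 (@Gamma R n) [set C] T.
Proof.
move=> coneC coneT TC; have [m] := ubnP (n - \dim U)%N.
elim: m U k S => // m IH U k S dimU Sk coneS SU TS.
have [_ _ [_ SC _]] := iter_Gamma_extreme coneC Sk.
have [<-|ST] := pselect (S = T); first by exists k.
have [x [bSx T_Sx [g Sg gx]]] := exposed_boundary_point coneS coneT ST TC SC TS.
have [S0 oS _ SZ _] := coneS.
have xU : x \notin U by apply: contra_ltN gx => /(SU _ _ Sg) ->.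
have dimUx : (\dim U < \dim (U + <[x]>))%N.
  rewrite ltnNge; apply: contra xU => dimUx_le.
  have /eqP -> : U == (U + <[x]>)%VS by rewrite eqEdim addvSl.
  by apply: (subvP (addvSr U <[x]>)); exact: memv_line.
apply: (IH (U + <[x]>)%VS k.+1 (tangent_cone S x)) => //.
- have := dimvS (subvf (U + <[x]>)%VS); rewrite dimvf dim_matrix mul1r.
  by move: dimU dimUx; lia.
- by exists S; split => //; exists x.
- by apply: open_cone_tangent_cone => //; apply: boundary_open_notin bSx.
- move=> h u; rewrite dual_tangent_coneE //; last by case: bSx.
  move=> [Sh hx] /memv_addP [u1 u1U [v /vlineP [a ->] ->]].
  by rewrite pairingDr pairingZr hx mulr0 addr0 SU.
Qed.

End TangentFamily.

Theorem mainTheorem13 (R : realType) (n : nat) (C T : set 'rV[R]_n) :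
  open_cone C -> open_cone T ->
  (tangent_family C T <-> extreme_set (dual_cone T) (dual_cone C)).
Proof.
move=> coneC coneT; split=> [[k [_ Tk]]|TC].
  by have [_ _] := iter_Gamma_extreme coneC Tk.
have [_ TC' _] := TC.
have [|k Tk] := extreme_iter_Gamma (U := 0%VS) coneC coneT TC (Gamma_self coneC) coneC _ TC'.
  by move=> g u _; rewrite memv0 => /eqP ->; rewrite pairing0r.
by exists k.+1.
Qed.
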